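(* Let $\beta,\gamma$ be real numbers with $0<\beta\le\gamma\le1$, let $m\ge0$ be an integer, let $\theta=(k_r)$ be a lacunary sequence and let $0<p<\infty$. Then $N_\theta^\beta(p,F,\Delta^m)\subset S_\theta^\gamma(F,\Delta^m)$ (and a sequence strongly $N_\theta^\beta(p,F,\Delta^m)$-summable to $X_0$ is $S_\theta^\gamma(F,\Delta^m)$-statistically convergent to $X_0$). Moreover, the inclusion is strict for some choices of $\beta$ and $\gamma$.
   Context: A fuzzy number is a map $X:\mathbb{R}\to[0,1]$ which is normal, fuzzy convex, upper semicontinuous, with compact closure of $\{t:X(t)>0\}$; $L(\mathbb{R})$ is the set of fuzzy numbers. Level sets $[X]^\alpha=\{t:X(t)\ge\alpha\}$ ($\alpha\in(0,1]$), $[X]^0=\overline{\{t:X(t)>0\}}$, are compact intervals $[u^\alpha,v^\alpha]$. Subtraction: $[X-Y]^\alpha=[u_1^\alpha-v_2^\alpha,v_1^\alpha-u_2^\alpha]$. Metric: $d(X,Y)=\sup_{\alpha\in[0,1]}\max\{|u_1^\alpha-u_2^\alpha|,|v_1^\alpha-v_2^\alpha|\}$. $(\Delta^0X)_k=X_k$, $(\Delta^1X)_k=X_k-X_{k+1}$, $(\Delta^mX)_k=(\Delta^1(\Delta^{m-1}X))_k$. A lacunary sequence is an increasing integer sequence $\theta=(k_r)_{r\ge0}$ with $k_0=0$, $h_r=k_r-k_{r-1}\to\infty$; $I_r=(k_{r-1},k_r]$. $S_\theta^\gamma(F,\Delta^m)$: sequences $X$ with some $X_0\in L(\mathbb{R})$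 such that for all $\varepsilon>0$, $\lim_r\frac{1}{h_r^\gamma}|\{k\in I_r:d(\Delta^mX_k,X_0)\ge\varepsilon\}|=0$. $N_\theta^\beta(p,F,\Delta^m)$: sequences $X$ with some $X_0\in L(\mathbb{R})$ (the limit) such that $\lim_r\frac{1}{h_r^\beta}\sum_{k\in I_r}d(\Delta^mX_k,X_0)^p=0$. *)

From HB Require Import structures.
From mathcomp Require Import all_boot all_order all_algebra.
From mathcomp Require Import all_classical all_reals all_analysis.
Set Implicit Arguments. Unset Strict Implicit. Unset Printing Implicit Defensive.
Import Order.TTheory GRing.Theory Num.Theory.
Import numFieldNormedType.Exports.
Local Open Scope classical_set_scope.
Local Open Scope ring_scope.

Section Fuzzy.
Variable R : realType.

Definition fuzzy_number (X : R -> R) : Prop :=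
  [/\ (forall t, 0 <= X t <= 1),
      (exists t, X t = 1),
      (forall s t l, 0 <= l <= 1 -> Num.min (X s) (X t) <= X (l * s + (1 - l) * t)),
      (forall t e, 0 < e -> exists2 d, 0 < d &
          forall s, `|s - t| < d -> X s < X t + e) &
      compact (closure [set t | 0 < X t])].

Definition lvl (X : R -> R) (a : R) : set R :=
  if 0 < a then [set t | a <= X t] else closure [set t | 0 < X t].

Definition lend (X : R -> R) (a : R) : R := inf (lvl X a).
Definition rend (X : R -> R) (a : R) : R := sup (lvl X a).

(* subtraction, defined through its level sets
   [X - Y]^a = [u1^a - v2^a, v1^a - u2^a]:
   (X - Y)(t) = sup {a in (0,1] | t in that interval} (0 if none). *)
Definition fsub (X Y : R -> R) : R -> R := fun t =>
  sup ([set 0] `|` [set a | 0 < a <= 1 /\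
        lend X a - rend Y a <= t <= rend X a - lend Y a]).

Definition fdist (X Y : R -> R) : R :=
  sup [set Num.max `|lend X a - lend Y a| `|rend X a - rend Y a|
      | a in `[0, 1]].

Fixpoint fdelta (m : nat) (X : nat -> R -> R) (k : nat) : R -> R :=
  match m with
  | 0 => X k
  | m'.+1 => fsub (fdelta m' X k) (fdelta m' X k.+1)
  end.

Definition fuzzy_seq (X : nat -> R -> R) : Prop := forall k, fuzzy_number (X k).

Definition lacunary (theta : nat -> nat) : Prop :=
  [/\ theta 0 = 0%N,
      (forall r, (theta r < theta r.+1)%N) &
      ((fun r => ((theta r.+1 - theta r)%N)%:R : R) @ \oo --> +oo)].

(* h_{r+1} = k_{r+1} - k_r ; I_{r+1} = (k_r, k_{r+1}] *)
Definition hlen (theta : nat -> nat) (r : nat) : nat := (theta r.+1 - theta r)%N.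
Definition Iblock (theta : nat -> nat) (r : nat) : seq nat :=
  iota (theta r).+1 (hlen theta r).

Definition S_conv (gamma : R) (theta : nat -> nat) (m : nat)
    (X : nat -> R -> R) (X0 : R -> R) : Prop :=
  forall eps : R, 0 < eps ->
    (fun r => (count (fun k => eps <= fdist (fdelta m X k) X0) (Iblock theta r))%:R
               / ((hlen theta r)%:R `^ gamma)) @ \oo --> (0 : R).

Definition N_conv (beta p : R) (theta : nat -> nat) (m : nat)
    (X : nat -> R -> R) (X0 : R -> R) : Prop :=
  (fun r => (\sum_(k <- Iblock theta r) fdist (fdelta m X k) X0 `^ p)
             / ((hlen theta r)%:R `^ beta)) @ \oo --> (0 : R).

Definition in_S (gamma : R) theta m (X : nat -> R -> R) : Prop :=
  fuzzy_seq X /\ exists X0, fuzzy_number X0 /\ S_conv gamma theta m X X0.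

Definition in_N (beta p : R) theta m (X : nat -> R -> R) : Prop :=
  fuzzy_seq X /\ exists X0, fuzzy_number X0 /\ N_conv beta p theta m X X0.

End Fuzzy.

(* Chebyshev: every index of the block I_r with d(Delta^m X_k, X_0) >= eps
   contributes at least eps^p to the sum of d^p over I_r, so the count divided
   by h_r^gamma >= h_r^beta is at most eps^-p times the N-mean.
   Strictness, with beta = gamma = 1: crisp numbers subtract like reals and
   Delta^m is inverted by iterated negative partial sums, so there is a crisp
   sequence whose m-th difference is h_r^(1/p) at the first index of each block
   and 0 elsewhere. It is statistically convergent to 0, as its differences are
   nonzero at most once per block. But d(crisp a, Z) >= |a - u_Z^1| for every
   fuzzy number Z, so the block means of d^p are at least 1 if u_Z^1 = 0, and at
   least |u_Z^1|^p (h_r - 1) / h_r otherwise. *)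

From HB Require Import structures.
From mathcomp Require Import all_boot all_order all_algebra.
From mathcomp Require Import all_classical all_reals all_analysis.
From mathcomp Require Import lra zify.
Import Order.TTheory GRing.Theory Num.Theory.
Import numFieldNormedType.Exports.
Local Open Scope ring_scope.

Section CrispNumbers.
Context {R : realType}.
Local Open Scope classical_set_scope.
Implicit Types (a b : R) (S : set R).

Lemma sup_attained S x : S x -> ubound S x -> sup S = x.
Proof.
move=> Sx ubx; apply/le_anti/andP; split; first by apply: ge_sup => //; exists x.
by apply: ub_le_sup => //; exists x.
Qed.

Lemma sup_ge0 S : S !=set0 -> (forall x, S x -> 0 <= x) -> 0 <= sup S.
Proof.
move=> [y Sy] S_ge0; have [ubS|nubS] := pselect (has_ubound S).
  exact: le_trans (S_ge0 _ Sy) (ub_le_sup ubS Sy).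
by rewrite sup_out // => -[].
Qed.

Lemma closure_set1 a : closure [set a] = [set a].
Proof.
apply/esym/closure_id/accessible_closed_set1.
exact/hausdorff_accessible/Rhausdorff.
Qed.

Definition crisp a : R -> R := fun t => if t == a then 1 else 0.

Lemma crisp_support a : [set t | 0 < crisp a t] = [set a].
Proof.
apply/seteqP; split => t /=; rewrite /crisp; last by move->; rewrite eqxx ltr01.
by case: eqP => // _; rewrite ltxx.
Qed.

Lemma lvl_crisp a al : al <= 1 -> lvl (crisp a) al = [set a].
Proof.
move=> al1; rewrite /lvl; case: ifPn => al0; last by rewrite crisp_support closure_set1.
apply/seteqP; split => t /=; rewrite /crisp; last by move->; rewrite eqxx.
by case: eqP => // _; rewrite leNgt al0.
Qed.

Lemma lend_crisp a al : al <= 1 -> lend (crisp a) al = a.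
Proof. by move=> al1; rewrite /lend lvl_crisp // inf1. Qed.

Lemma rend_crisp a al : al <= 1 -> rend (crisp a) al = a.
Proof. by move=> al1; rewrite /rend lvl_crisp // sup1. Qed.

Lemma fsub_crisp a b : fsub (crisp a) (crisp b) = crisp (a - b).
Proof.
apply/funext => t; rewrite [RHS]/crisp /fsub.
case: eqP => [->|neq_t].
  apply: sup_attained.
    by right; split; rewrite ?ltr01 ?lexx // !lend_crisp ?rend_crisp // lexx.
  by move=> y [->|[/andP[_ ->]]]; rewrite ?ler01.
apply: sup_attained; first by left.
move=> y [->//|[/andP[_ y1]]]; rewrite !lend_crisp ?rend_crisp // => le_t.
by exfalso; apply/neq_t/le_anti; rewrite andbC.
Qed.

Lemma fdist_crisp a b : fdist (crisp a) (crisp b) = `|a - b|.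
Proof.
rewrite /fdist; apply: sup_attained.
  exists 1; first by rewrite /= in_itv /= ler01 lexx.
  by rewrite !lend_crisp ?rend_crisp // maxxx.
move=> y [al]; rewrite /= in_itv /= => /andP[_ al1] <-.
by rewrite !lend_crisp ?rend_crisp // maxxx.
Qed.

Lemma crisp_ge0 a t : 0 <= crisp a t.
Proof. by rewrite /crisp; case: ifP; rewrite ?ler01. Qed.

Lemma crisp_fuzzy a : fuzzy_number (crisp a).
Proof.
have crisp_neq t : t != a -> crisp a t = 0 by rewrite /crisp => /negbTE->.
split.
- by move=> t; rewrite crisp_ge0 /crisp; case: ifP; rewrite ?lexx ?ler01.
- by exists a; rewrite /crisp eqxx.
- move=> s t l _; rewrite ge_min.
  have [->|/crisp_neq->] := eqVneq s a; last by rewrite crisp_ge0.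
  have [->|/crisp_neq->] := eqVneq t a; last by rewrite crisp_ge0 orbT.
  by rewrite -mulrDl subrKC mul1r lexx.
- move=> x e e0; have [->|xa] := eqVneq x a.
    by exists 1 => // s _; rewrite {2}/crisp eqxx ltr_pwDr // /crisp; case: ifP.
  exists `|x - a|; first by rewrite normr_gt0 subr_eq0.
  move=> s; rewrite (crisp_neq _ xa) add0r.
  by have [->|/crisp_neq->//] := eqVneq s a; rewrite distrC ltxx.
- by rewrite crisp_support closure_set1; exact: compact_set1.
Qed.

Lemma fdist_ge0 (X Y : R -> R) : 0 <= fdist X Y.
Proof.
apply: sup_ge0; last by move=> _ [al _ <-]; rewrite le_max normr_ge0.
by exists (Num.max `|lend X 0 - lend Y 0| `|rend X 0 - rend Y 0|); exists 0;
   rewrite //= in_itv /= lexx ler01.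
Qed.

Lemma inf_sup_norm_le S M t0 : S t0 -> (forall t, S t -> `|t| <= M) ->
  `|inf S| <= M /\ `|sup S| <= M.
Proof.
move=> St0 S_le; have S0 : S !=set0 by exists t0.
have lbS : lbound S (- M) by move=> t /S_le; rewrite ler_norml => /andP[].
have ubS : ubound S M by move=> t /S_le; rewrite ler_norml => /andP[].
have infS_ge : - M <= inf S by apply: lb_le_inf.
have infS_le : inf S <= t0 by apply: ge_inf => //; exists (- M).
have supS_le : sup S <= M by apply: ge_sup.
have supS_ge : t0 <= sup S by apply: ub_le_sup => //; exists M.
by rewrite !ler_norml; split; apply/andP; split; lra.
Qed.

Lemma fuzzy_ends_bounded (Z : R -> R) : fuzzy_number Z ->
  exists M, forall al, 0 <= al <= 1 -> `|lend Z al| <= M /\ `|rend Z al| <= M.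
Proof.
case=> _ [t1 Zt1] _ _ /compact_bounded[M [_ supp_le]].
have supp_t1 : [set t | 0 < Z t] t1 by rewrite /= Zt1 ltr01.
have closure_le t : closure [set t | 0 < Z t] t -> `|t| <= M + 1.
  by apply: supp_le; rewrite ltrDl.
exists (M + 1) => al /andP[al0 al1]; rewrite /lend /rend /lvl.
case: ifPn => [al_gt0|_]; last exact: inf_sup_norm_le (subset_closure supp_t1) closure_le.
apply: (@inf_sup_norm_le _ _ t1) => [|t /= al_le]; first by rewrite /= Zt1.
by apply/closure_le/subset_closure; rewrite /= (lt_le_trans al_gt0).
Qed.

Lemma fdist_crisp_ge a (Z : R -> R) : fuzzy_number Z ->
  `|a - lend Z 1| <= fdist (crisp a) Z.
Proof.
move=> /fuzzy_ends_bounded[M Z_le]; rewrite /fdist.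
have dist_le y : [set Num.max `|lend (crisp a) al - lend Z al|
    `|rend (crisp a) al - rend Z al| | al in `[0, 1]] y -> y <= `|a| + M.
  move=> [al]; rewrite /= in_itv /= => al01 <-; have [lZ rZ] := Z_le _ al01.
  case/andP: al01 => _ al1; rewrite lend_crisp ?rend_crisp // ge_max.
  by apply/andP; split; apply: le_trans (ler_normB _ _) _; rewrite lerD2l.
apply: le_trans (ub_le_sup _ _); last first.
- by exists 1; first by rewrite /= in_itv /= ler01 lexx.
- by exists (`|a| + M).
- by rewrite lend_crisp ?rend_crisp // le_max lexx.
Qed.

End CrispNumbers.

Lemma count_mul_le_sum (R : numDomainType) (T : eqType) (P : pred T)
    (F : T -> R) (c : R) (s : seq T) :
  (forall k, k \in s -> P k -> c <= F k) -> (forall k, k \in s -> 0 <= F k) ->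
  (count P s)%:R * c <= \sum_(k <- s) F k.
Proof.
elim: s => [|k s IHs] c_le F_ge0; first by rewrite big_nil mul0r.
rewrite big_cons /= natrD mulrDl; apply: lerD; last first.
  by apply: IHs => j js; [apply: c_le|apply: F_ge0]; rewrite inE js orbT.
case: (boolP (P k)) => Pk; first by rewrite mul1r c_le ?mem_head.
by rewrite mul0r F_ge0 ?mem_head.
Qed.

Section IncreasingBlocks.
Context {theta : nat -> nat}.
Hypothesis theta_incr : forall r, (theta r < theta r.+1)%N.

Lemma hlen_gt0 r : (0 < hlen theta r)%N.
Proof. by rewrite subn_gt0. Qed.

Lemma leq_theta : {mono theta : r r' / (r <= r')%N}.
Proof. exact/leq_mono/(homo_ltn ltn_trans). Qed.

Lemma ltn_theta : {mono theta : r r' / (r < r')%N}.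
Proof. by move=> r r'; rewrite !ltnNge leq_theta. Qed.

Lemma theta_inj : injective theta.
Proof. exact/incn_inj/leq_theta. Qed.

Lemma leq_theta_self r : (r <= theta r)%N.
Proof. by elim: r => // r IHr; apply: leq_ltn_trans IHr (theta_incr r). Qed.

Lemma Iblock_cons r :
  Iblock theta r = (theta r).+1 :: iota (theta r).+2 (hlen theta r).-1.
Proof. by rewrite /Iblock; case: (hlen theta r) (hlen_gt0 r). Qed.

Lemma mem_Iblock_tail r k : k \in iota (theta r).+2 (hlen theta r).-1 ->
  ((theta r).+1 < k <= theta r.+1)%N.
Proof. by rewrite mem_iota /hlen; have := theta_incr r; lia. Qed.

Lemma theta_between r i : ~ (theta r < theta i < theta r.+1)%N.
Proof. by rewrite !ltn_theta; lia. Qed.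

End IncreasingBlocks.

Lemma N_conv_S_conv (R : realType) (beta gamma p : R) theta m X X0 :
  (forall r, (theta r < theta r.+1)%N) -> 0 < p -> beta <= gamma ->
  N_conv beta p theta m X X0 -> S_conv gamma theta m X X0.
Proof.
move=> theta_incr p_gt0 le_beta_gamma XN eps eps_gt0.
have epsp_gt0 : 0 < eps `^ p by rewrite powR_gt0.
have := cvgM XN (cvg_cst (eps `^ p)^-1).
rewrite mul0r => /(_ eventually_filter eventually_filter) bound_cvg.
apply: (squeeze_cvgr _ (cvg_cst (0 : R)) bound_cvg).
apply: nearW => r /=; set n := (count _ _)%:R; set S := \sum_(_ <- _) _.
have h_ge1 : 1 <= (hlen theta r)%:R :> R by rewrite ler1n hlen_gt0.
have hbeta_gt0 : 0 < (hlen theta r)%:R `^ beta by rewrite powR_gt0 ?(lt_le_trans ltr01).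
have hgamma_gt0 : 0 < (hlen theta r)%:R `^ gamma by rewrite powR_gt0 ?(lt_le_trans ltr01).
have Chebyshev : n * eps `^ p <= S.
  apply: count_mul_le_sum => [k _ /= eps_le|k _]; last exact: powR_ge0.
  by apply: (ge0_ler_powR (ltW p_gt0)); rewrite ?nnegrE ?fdist_ge0 ?(ltW eps_gt0).
apply/andP; split; first by rewrite divr_ge0 ?ler0n ?(ltW hgamma_gt0).
rewrite mulrAC; apply: ler_pM; rewrite ?ler0n ?invr_ge0 ?(ltW hgamma_gt0) //.
  by rewrite -(ler_pM2r epsp_gt0) mulfVK ?gt_eqF.
by rewrite lef_pV2 ?posrE // ler_powR.
Qed.

Section FiniteDifferences.
Context {R : realType}.
Implicit Types (x y : nat -> R).

Definition seqdiff x k := x k - x k.+1.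

Definition seqantidiff y k := - \sum_(j < k) y j.

Lemma seqdiffK y : seqdiff (seqantidiff y) = y.
Proof. by apply/funext => k; rewrite /seqdiff /seqantidiff big_ord_recr /=; lra. Qed.

Lemma iter_seqdiffK m y : iter m seqdiff (iter m seqantidiff y) = y.
Proof. by elim: m y => // m IHm y; rewrite iterSr iterS seqdiffK IHm. Qed.

Lemma fdelta_crisp m x k :
  fdelta m (fun j => crisp (x j)) k = crisp (iter m seqdiff x k).
Proof. by elim: m k => // m IHm k; rewrite /= !IHm fsub_crisp. Qed.

End FiniteDifferences.

Section Counterexample.
Context {R : realType}.
Variables (p : R) (theta : nat -> nat) (m : nat).
Hypothesis theta_incr : forall r, (theta r < theta r.+1)%N.
Local Open Scope classical_set_scope.

Lemma near_ge_not_cvg0 (u : nat -> R) (c : R) :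
  0 < c -> (\forall n \near \oo, c <= u n) -> ~ u @ \oo --> 0.
Proof.
move=> c_gt0 c_le /cvgrPdist_lt /(_ c c_gt0) u_small.
have [n [/= u_lt le_u]] := filter_ex (filterI u_small c_le).
by move: u_lt; rewrite sub0r normrN ltNge (le_trans le_u (ler_norm _)).
Qed.

(* [spike] is [h_r ^ (1/p)] at the first index [theta r + 1] of each block and
   [0] elsewhere: the sum has at most one term since [theta] is injective. *)
Definition spike (k : nat) : R :=
  \sum_(r < k | (theta r).+1 == k) (hlen theta r)%:R `^ p^-1.

Lemma spike_first r : spike (theta r).+1 = (hlen theta r)%:R `^ p^-1.
Proof.
have r_lt : (r < (theta r).+1)%N by rewrite ltnS leq_theta_self.
rewrite /spike (big_pred1 (Ordinal r_lt)) // => i /=.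
by rewrite eqSS; apply/eqP/eqP => [/(theta_inj theta_incr) eq_ir|->]; first exact: val_inj.
Qed.

Lemma spike_tail r k : k \in iota (theta r).+2 (hlen theta r).-1 -> spike k = 0.
Proof.
move=> /(mem_Iblock_tail theta_incr) k_in; rewrite /spike big_pred0 // => i.
apply/negbTE/eqP => eq_ik; apply: (theta_between theta_incr r i).
by rewrite -ltnS eq_ik.
Qed.

Definition spike_seq (j : nat) : R -> R := crisp (iter m seqantidiff spike j).

Lemma fdelta_spike_seq k : fdelta m spike_seq k = crisp (spike k).
Proof. by rewrite fdelta_crisp iter_seqdiffK. Qed.

Hypothesis hlen_cvg : (fun r => (hlen theta r)%:R : R) @ \oo --> +oo.
Hypothesis p_gt0 : 0 < p.

Let hlenR_gt0 r : 0 < (hlen theta r)%:R :> R.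
Proof. by rewrite ltr0n hlen_gt0. Qed.

Lemma S_conv_spike_seq : S_conv 1 theta m spike_seq (crisp 0).
Proof.
move=> eps eps_gt0.
have count_le1 r : (count (fun k => eps <= fdist (fdelta m spike_seq k) (crisp 0))%R
    (Iblock theta r) <= 1)%N.
  rewrite Iblock_cons //= (eq_in_count (a2 := pred0)) ?count_pred0 ?addn0 ?leq_b1 //.
  move=> k /spike_tail spike0 /=.
  rewrite fdelta_spike_seq spike0 fdist_crisp subr0 normr0.
  by apply/negbTE; rewrite -ltNge.
apply: (@squeeze_cvgr _ _ _ _ (fun=> 0) (fun r => (hlen theta r)%:R^-1)).
- apply: nearW => r; rewrite powRr1 ?ler0n // divr_ge0 ?ler0n //=.
  by rewrite -[leRHS]mul1r ler_pM2r ?invr_gt0 ?hlenR_gt0 // lern1 count_le1.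
- exact: cvg_cst.
- by apply/gtr0_cvgV0 => //; exact: nearW.
Qed.

Lemma sum_spike_seq_ge (Z : R -> R) r : fuzzy_number Z ->
  `|(hlen theta r)%:R `^ p^-1 - lend Z 1| `^ p + ((hlen theta r).-1)%:R * `|lend Z 1| `^ p
  <= \sum_(k <- Iblock theta r) fdist (fdelta m spike_seq k) Z `^ p.
Proof.
move=> Z_fuzzy.
have dist_ge k : `|spike k - lend Z 1| `^ p <= fdist (fdelta m spike_seq k) Z `^ p.
  apply: (ge0_ler_powR (ltW p_gt0)); rewrite ?nnegrE ?fdist_ge0 //.
  by rewrite fdelta_spike_seq fdist_crisp_ge.
rewrite Iblock_cons // big_cons -spike_first; apply: lerD; first exact: dist_ge.
rewrite -[X in X%:R](size_iota (theta r).+2) -count_predT.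
apply: count_mul_le_sum => [k /spike_tail spike0 _|k _]; last exact: powR_ge0.
by have := dist_ge k; rewrite spike0 sub0r normrN.
Qed.

Lemma not_N_conv_spike_seq (Z : R -> R) : fuzzy_number Z -> ~ N_conv 1 p theta m spike_seq Z.
Proof.
move=> Z_fuzzy; set c := lend Z 1.
rewrite /N_conv; set mean := (X in X @ \oo --> _).
have mean_ge r : `|(hlen theta r)%:R `^ p^-1 - c| `^ p + ((hlen theta r).-1)%:R * `|c| `^ p
    <= mean r * (hlen theta r)%:R.
  by rewrite /mean powRr1 ?ler0n // mulfVK ?gt_eqF ?hlenR_gt0 ?sum_spike_seq_ge.
have [c0|c_neq0] := eqVneq c 0.
  apply: (@near_ge_not_cvg0 mean _ ltr01); apply: nearW => r.
  rewrite -(ler_pM2r (hlenR_gt0 r)) mul1r.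
  apply: le_trans (mean_ge r); rewrite c0 subr0 normr0 powR0 ?gt_eqF // mulr0 addr0.
  by rewrite ger0_norm ?powR_ge0 // -powRrM mulVf ?gt_eqF // powRr1 ?ler0n.
have cp_gt0 : 0 < `|c| `^ p by rewrite powR_gt0 // normr_gt0.
have half_gt0 : 0 < `|c| `^ p / 2 by rewrite divr_gt0.
apply: (@near_ge_not_cvg0 mean _ half_gt0).
apply: filterS (cvgry_ge hlen_cvg 2) => r /= h_ge2.
rewrite -(ler_pM2r (hlenR_gt0 r)); apply: le_trans (mean_ge r).
have A_ge0 := powR_ge0 `|(hlen theta r)%:R `^ p^-1 - c| p.
have h_eq : (hlen theta r)%:R = ((hlen theta r).-1)%:R + 1 :> R.
  by rewrite natr1 prednK ?hlen_gt0.
move: A_ge0 h_ge2 cp_gt0; rewrite h_eq; nra.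
Qed.

End Counterexample.

Theorem theorem2p7 (R : realType) (m : nat) (theta : nat -> nat) (p : R) :
  lacunary R theta -> 0 < p ->
  (forall beta gamma : R, 0 < beta -> beta <= gamma -> gamma <= 1 ->
     (forall X, in_N beta p theta m X -> in_S gamma theta m X) /\
     (forall X X0, fuzzy_seq X -> fuzzy_number X0 ->
        N_conv beta p theta m X X0 -> S_conv gamma theta m X X0)) /\
  (exists beta gamma : R, [/\ 0 < beta, beta <= gamma, gamma <= 1 &
     exists X, in_S gamma theta m X /\ ~ in_N beta p theta m X]).
Proof.
move=> [_ theta_incr hlen_cvg] p_gt0; split.
  move=> beta gamma _ le_beta_gamma _.
  split=> [X [X_fuzzy [X0 [X0_fuzzy XN]]]|X X0 _ _]; last exact: N_conv_S_conv.
  by split=> //; exists X0; split=> //; exact: N_conv_S_conv XN.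
exists 1, 1; split=> //; exists (spike_seq p theta m); split.
  split=> [k|]; first exact: crisp_fuzzy.
  by exists (crisp 0); split; [exact: crisp_fuzzy|exact: S_conv_spike_seq].
by move=> [_ [Z [Z_fuzzy ZN]]]; exact: not_N_conv_spike_seq ZN.
Qed.
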